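(* Let $n\ge 1$ and $q>1$. The maximum success probability of any restricted strategy for the New Hats-on-a-line Game with $q$ hat colours and $n$ players is $1-\left(\frac{q-1}{q}\right)^{n}$.
   Context: The New Hats-on-a-line Game with $q$ colours and $n$ players: players $P_1,\dots,P_n$ stand in a line, and each player $P_i$ receives a hat whose colour $c_i$ is chosen uniformly at random from a fixed set of $q$ colours, independently of the other hats. Player $P_i$ sees exactly the hat colours $c_{i+1},\dots,c_n$. The players respond sequentially in the order $P_1,\dots,P_n$; each response is either a colour (a guess of one's own hat colour) or ''pass'', and each player hears all previous responses. No other communication is allowed, apart from agreeing on a strategy beforehand. A strategy specifies (deterministically), for each player $P_i$, his response as a function of the colours he sees and the responses he has heard. The players win if at least one player guesses correctly and no player guesses incorrectly; the success probability of a strategy is the probability that the players win. A strategy is restricted if, for every configuration of hats $(c_1,\dots,c_n)$, any guess made by a player other than $P_1$ is correct. *)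

From mathcomp Require Import all_boot all_order all_algebra.
Set Implicit Arguments. Unset Strict Implicit. Unset Printing Implicit Defensive.
Import Order.TTheory GRing.Theory Num.Theory.

(* Colours are 'I_q; a response is [option 'I_q] (None = "pass").
   Players are indexed 0..n-1 (player P_{i+1} has index i).
   A strategy gives, for player index i, the response as a function of
   the colours he sees (the list c_{i+1},...,c_{n-1}, 0-based) and the
   list of responses heard so far (responses of players 0..i-1). *)
Definition strategy (q : nat) :=
  nat -> seq 'I_q -> seq (option 'I_q) -> option 'I_q.

Fixpoint responses q (s : strategy q) (c : seq 'I_q) (k : nat)
  : seq (option 'I_q) :=
  match k with
  | 0 => [::]
  | k'.+1 => let r := responses s c k' in rcons r (s k' (drop k c) r)
  end.

Definition resp q n (s : strategy q) (c : n.-tuple 'I_q) (i : 'I_n)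
  : option 'I_q := nth None (responses s c n) i.

Definition wins q n (s : strategy q) (c : n.-tuple 'I_q) : bool :=
  [exists i : 'I_n, resp s c i == Some (tnth c i)] &&
  [forall i : 'I_n, if resp s c i is Some x then x == tnth c i else true].

(* success probability: hats uniform and independent, so each of the q^n
   configurations has probability 1/q^n *)
Definition success_prob q n (s : strategy q) : rat :=
  (#|[set c : n.-tuple 'I_q | wins s c]|%:R / (q ^ n)%:R)%R.

Definition restricted q n (s : strategy q) : Prop :=
  forall (c : n.-tuple 'I_q) (i : 'I_n) (x : 'I_q),
    0 < i -> resp s c i = Some x -> x = tnth c i.

From mathcomp Require Import all_boot all_order all_algebra.
From mathcomp Require Import ring.
Import Order.TTheory GRing.Theory Num.Theory.
Set Implicit Arguments. Unset Strict Implicit. Unset Printing Implicit Defensive.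

(* Nobody sees c_1, so if P_1 passes, the remaining players play a game on
   c_2, ..., c_n whose outcome does not depend on c_1; if P_1 guesses, at least
   q - 1 values of c_1 lose. By induction at least (q - 1)^n configurations are
   lost by every strategy, restricted or not. Conversely, fix a colour z and let
   the first player who sees no hat of colour z and has heard only passes guess
   z: the last z-hat, if any, is guessed correctly by its owner, so the players
   win exactly when some hat has colour z, and only P_1 can guess wrongly. *)

Lemma big_tuple0 (R : Type) (idx : R) (op : Monoid.com_law idx) (T : finType)
    (F : 0.-tuple T -> R) :
  \big[op/idx]_(t : 0.-tuple T) F t = F [tuple].
Proof. by apply: big_pred1 => t /=; rewrite [t]tuple0. Qed.

Lemma big_tuple_cons (R : Type) (idx : R) (op : Monoid.com_law idx) (T : finType)
    m (F : m.+1.-tuple T -> R) :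
  \big[op/idx]_(c : m.+1.-tuple T) F c =
  \big[op/idx]_(t : m.-tuple T) \big[op/idx]_(x : T) F [tuple of x :: t].
Proof.
rewrite pair_big (reindex (fun p : m.-tuple T * T => [tuple of p.2 :: p.1])) //=.
exists (fun c => (behead_tuple c, thead c)) => [[t x] _ | c _] /=.
- by congr pair; apply: val_inj.
- by rewrite -tuple_eta.
Qed.

Lemma tnth_zip (S T : Type) n (u : n.-tuple S) (v : n.-tuple T) (i : 'I_n) :
  tnth (zip_tuple u v) i = (tnth u i, tnth v i).
Proof.
by rewrite (tnth_nth (tnth u i, tnth v i)) /= nth_zip ?size_tuple // -!tnth_nth.
Qed.

Section Play.

Variables (q : nat) (s : strategy q).

Fixpoint responses_from (j : nat) (h : seq (option 'I_q)) (t : seq 'I_q)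
    : seq (option 'I_q) :=
  if t is _ :: t' then let r := s j t' h in r :: responses_from j.+1 (rcons h r) t'
  else [::].

Lemma size_responses_from j h t : size (responses_from j h t) = size t.
Proof. by elim: t j h => //= x t IHt j h; rewrite IHt. Qed.

Lemma responses_from_split (c : seq 'I_q) k : k <= size c ->
  responses_from 0 [::] c =
  responses s c k ++ responses_from k (responses s c k) (drop k c).
Proof.
elim: k => [|k IHk] lt_k_c; first by rewrite drop0.
rewrite IHk; last exact: ltnW.
case def_t: (drop k c) => [|x t].
  by move: lt_k_c; rewrite -subn_gt0 -size_drop def_t.
have drop_t : drop k.+1 c = t by rewrite -add1n -drop_drop def_t /= drop0.
by rewrite /= drop_t -cat_rcons.
Qed.

Lemma resp_responses_from n (c : n.-tuple 'I_q) (i : 'I_n) :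
  resp s c i = nth None (responses_from 0 [::] c) i.
Proof.
rewrite /resp (@responses_from_split c n) ?size_tuple //.
by rewrite drop_oversize ?size_tuple ?cats0.
Qed.

End Play.

Definition win_seq q (r : seq (option 'I_q)) (c : seq 'I_q) : bool :=
  has (fun p => p.1 == Some p.2) (zip r c) &&
  all (fun p => if p.1 is Some x then x == p.2 else true) (zip r c).

Lemma win_seq_pass q (r : seq (option 'I_q)) x c :
  win_seq (None :: r) (x :: c) = win_seq r c.
Proof. by []. Qed.

Lemma win_seq_wrong_guess q (r : seq (option 'I_q)) y x c :
  y != x -> win_seq (Some y :: r) (x :: c) = false.
Proof. by move=> /negbTE ne_yx; rewrite /win_seq /= ne_yx andbF. Qed.

Lemma wins_win_seq q n (s : strategy q) (c : n.-tuple 'I_q) :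
  wins s c = win_seq (responses_from s 0 [::] c) c.
Proof.
have size_r : size (responses_from s 0 [::] c) == n.
  by rewrite size_responses_from size_tuple.
pose r := Tuple size_r.
have resp_r i : resp s c i = tnth r i by rewrite resp_responses_from (tnth_nth None).
rewrite /wins /win_seq -[responses_from _ _ _ _]/(val r).
congr andb.
- by apply/existsP/has_tnthP => -[i ok_i]; exists i; move: ok_i; rewrite tnth_zip resp_r.
- by apply/forallP/all_tnthP => ok i; have := ok i; rewrite tnth_zip resp_r.
Qed.

Lemma sum_nat_neq (T : finType) (y : T) : \sum_(x : T) (x != y) = #|T|.-1.
Proof.
rewrite (bigD1 y) //= eqxx add0n -(cardC1 y) -sum1_card.
by apply: eq_bigr => x ->.
Qed.

Lemma losses_cons_ge q (s : strategy q) j h t :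
  (q - 1) * ~~ win_seq (responses_from s j.+1 (rcons h None) t) t <=
  \sum_(x : 'I_q) ~~ win_seq (responses_from s j h (x :: t)) (x :: t).
Proof.
rewrite /=; case: (s j t h) => [y|].
- apply: (@leq_trans (q - 1)); first by case: (~~ _); rewrite ?muln1 ?muln0.
  rewrite -[q in q - 1](card_ord q) subn1 -(sum_nat_neq y) leq_sum // => x _.
  by case: eqP => //= /eqP ne_xy; rewrite win_seq_wrong_guess // eq_sym.
- under eq_bigr do rewrite win_seq_pass.
  by rewrite sum_nat_const card_ord leq_mul2r leq_subr orbT.
Qed.

Lemma losses_from_ge q (s : strategy q) j h m :
  (q - 1) ^ m <= \sum_(t : m.-tuple 'I_q) ~~ win_seq (responses_from s j h t) t.
Proof.
elim: m j h => [|m IHm] j h; first by rewrite big_tuple0.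
rewrite big_tuple_cons expnS.
apply: (@leq_trans ((q - 1) *
  \sum_(t : m.-tuple 'I_q) ~~ win_seq (responses_from s j.+1 (rcons h None) t) t)).
  by rewrite leq_mul2l IHm orbT.
by rewrite big_distrr leq_sum // => t _; apply: losses_cons_ge.
Qed.

Definition guess_absent q (z : 'I_q) : strategy q :=
  fun _ seen heard => if all (pred1 None) heard && (z \notin seen) then Some z else None.

Section GuessAbsent.

Variables (q : nat) (z : 'I_q).

Lemma responses_from_after_guess j h t : ~~ all (pred1 None) h ->
  responses_from (guess_absent z) j h t = nseq (size t) None.
Proof.
elim: t j h => [|x t IHt] j h //= guessed.
by rewrite {1}/guess_absent (negbTE guessed) IHt // all_rcons negb_and guessed orbT.
Qed.

Lemma win_seq_last_guess (y x : 'I_q) t :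
  win_seq (Some y :: nseq (size t) None) (x :: t) = (y == x).
Proof.
rewrite /win_seq /=; have [-> | ne_yx] /= := eqVneq y x; last by rewrite andbF.
by rewrite !eqxx /=; elim: t => //= x' t ->.
Qed.

Lemma guess_absent_silent j seen heard : all (pred1 None) heard ->
  guess_absent z j seen heard = if z \in seen then None else Some z.
Proof. by rewrite /guess_absent => ->; case: (z \in seen). Qed.

Lemma win_seq_guess_absent j h t : all (pred1 None) h ->
  win_seq (responses_from (guess_absent z) j h t) t = (z \in t).
Proof.
elim: t j h => [|x t IHt] j h //= silent.
rewrite guess_absent_silent // in_cons.
have [z_t | z_t] /= := boolP (z \in t).
  by rewrite orbT win_seq_pass IHt // all_rcons silent.
by rewrite orbF responses_from_after_guess ?all_rcons // win_seq_last_guess.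
Qed.

Lemma guess_absent_correct j h t i y : all (pred1 None) h ->
  nth None (responses_from (guess_absent z) j h t) i = Some y ->
  (0 < i) || (z \in t) -> y = nth z t i.
Proof.
elim: t j h i => [|x t IHt] j h i silent; first by rewrite /= nth_nil => /eqP.
rewrite /= guess_absent_silent //.
have [z_t | z_t] /= := boolP (z \in t).
  case: i => [|i] /=; first by move=> /eqP.
  move=> r_i _; apply: (IHt _ _ _ _ r_i); last by rewrite z_t orbT.
  by rewrite all_rcons silent.
rewrite responses_from_after_guess ?all_rcons //.
case: i => [|i] /=; last by rewrite nth_nseq if_same.
by move=> [<-]; rewrite in_cons (negbTE z_t) orbF => /eqP.
Qed.

End GuessAbsent.

Lemma guess_absent_restricted q n (z : 'I_q) : restricted n (guess_absent z).
Proof.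
move=> c i y i_gt0; rewrite resp_responses_from (tnth_nth z) => r_i.
by apply: guess_absent_correct r_i _; rewrite ?i_gt0.
Qed.

Lemma sum_tuple_notin (T : finType) (z : T) m :
  \sum_(t : m.-tuple T) (z \notin t) = #|T|.-1 ^ m.
Proof.
elim: m => [|m IHm]; first by rewrite big_tuple0.
rewrite big_tuple_cons expnS -IHm big_distrr; apply: eq_bigr => t _ /=.
have [z_t | z_t] := boolP (z \in t).
  by rewrite muln0 big1 // => x _; rewrite in_cons z_t orbT.
rewrite muln1 -(sum_nat_neq z); apply: eq_bigr => x _.
by rewrite in_cons (negbTE z_t) orbF eq_sym.
Qed.

Definition losses q n (s : strategy q) : nat :=
  \sum_(c : n.-tuple 'I_q) ~~ wins s c.

Lemma losses_ge q n (s : strategy q) : (q - 1) ^ n <= losses n s.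
Proof. by rewrite /losses; under eq_bigr do rewrite wins_win_seq; apply: losses_from_ge. Qed.

Lemma losses_guess_absent q n (z : 'I_q) : losses n (guess_absent z) = (q - 1) ^ n.
Proof.
rewrite /losses; under eq_bigr do rewrite wins_win_seq win_seq_guess_absent //.
by rewrite sum_tuple_notin card_ord subn1.
Qed.

Local Open Scope ring_scope.

Lemma success_probE q n (s : strategy q) : (0 < q)%N ->
  success_prob n s = 1 - (losses n s)%:R / (q ^ n)%:R :> rat.
Proof.
move=> q_gt0.
have wins_losses : (#|[set c : n.-tuple 'I_q | wins s c]| + losses n s = q ^ n)%N.
  rewrite -sum1dep_card big_mkcond /= -big_split /=.
  rewrite -[in RHS](card_ord q) -card_tuple -sum1_card.
  by apply: eq_bigr => c _; case: (wins s c).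
have qn_neq0 : (q ^ n)%:R != 0 :> rat by rewrite pnatr_eq0 -lt0n expn_gt0 q_gt0.
rewrite /success_prob -wins_losses natrD.
by field; rewrite -natrD wins_losses.
Qed.

Theorem lemma5 (n q : nat) (hn : (1 <= n)%N) (hq : (1 < q)%N) :
  (exists s : strategy q, restricted n s /\
     success_prob n s = 1 - ((q - 1)%:R / q%:R) ^+ n) /\
  (forall s : strategy q, restricted n s ->
     success_prob n s <= 1 - ((q - 1)%:R / q%:R) ^+ n :> rat).
Proof.
have q_gt0 : (0 < q)%N by apply: ltnW.
have -> : ((q - 1)%:R / q%:R) ^+ n = ((q - 1) ^ n)%:R / (q ^ n)%:R :> rat.
  by rewrite expr_div_n !natrX.
split.
- exists (guess_absent (Ordinal q_gt0)); split; first exact: guess_absent_restricted.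
  by rewrite success_probE // losses_guess_absent.
- move=> s _; rewrite success_probE // lerD2l lerN2 ler_pM2r ?ler_nat ?losses_ge //.
  by rewrite invr_gt0 ltr0n expn_gt0 q_gt0.
Qed.
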